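(* In the setting of the context, the set $\{g^*(z) : g \in G\}$ is a $k(Y)$-basis of $k(X)$.
   Context: Let $k$ be an algebraically closed field of characteristic $p>0$, $G$ a finite $p$-group acting faithfully on a smooth projective curve $X$ over $k$, $Y := X/G$, $\pi : X\to Y$ the quotient map. For $P\in X(k)$ let $G_{P,i}$ be the lower ramification groups, $G_P$ the stabilizer, $d'_P := \sum_{i\ge1}(\#G_{P,i}-1)$. Assume: (A) $G_P$ is normal in $G$ for all $P\in X(k)$; (B) $z \in k(X)$ satisfies $\mathrm{ord}_P(z) \ge -d'_P$ for all $P \in X(k)$ and $\mathrm{tr}_{k(X)/k(Y)}(z) \neq 0$. *)

From HB Require Import structures.
From mathcomp Require Import all_boot all_order all_algebra all_fingroup all_solvable.
From mathcomp Require Import boolp.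
Set Implicit Arguments. Unset Strict Implicit. Unset Printing Implicit Defensive.
Import Order.TTheory GRing.Theory Num.Theory.
Local Open Scope ring_scope.

(* K is the function field k(X) of a smooth projective curve over k,
   i.e. a finitely generated extension of transcendence degree 1:
   some x in K is transcendental over k and K is a finite-dimensional
   k(x)-vector space. k is embedded in K via iota. *)
Definition function_field_1 (k K : fieldType) (iota : {rmorphism k -> K}) : Prop :=
  exists x : K,
    (forall q : {poly k}, (map_poly iota q).[x] = 0 -> q = 0) /\
    exists (n : nat) (b : 'I_n -> K),
      forall y : K, exists num den : 'I_n -> {poly k},
        (forall i, (map_poly iota (den i)).[x] != 0) /\
        y = \sum_(i < n) ((map_poly iota (num i)).[x]
                           / (map_poly iota (den i)).[x]) * b i.

(* Points P of X(k) = normalized discrete valuations ord_P : K^* ->> Z,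
   trivial on k (value at 0 fixed to 0 as a junk value). *)
Definition is_place (k K : fieldType) (iota : {rmorphism k -> K}) (v : K -> int)
  : Prop :=
  [/\ v 0 = 0,
      forall x y, x != 0 -> y != 0 -> v (x * y) = v x + v y,
      forall x y, x != 0 -> y != 0 -> x + y != 0 ->
        Num.min (v x) (v y) <= v (x + y),
      forall c, c != 0 -> v (iota c) = 0 &
      exists t, v t = 1].

Definition faithful_k_action (k K : fieldType) (iota : {rmorphism k -> K})
  (gT : finGroupType) (G : {group gT}) (act : gT -> K -> K) : Prop :=
  (forall g, g \in G -> forall x y, act g (x + y) = act g x + act g y) /\
  (forall g, g \in G -> forall x y, act g (x * y) = act g x * act g y) /\
  (forall g, g \in G -> act g 1 = 1) /\
  (forall g, g \in G -> forall c, act g (iota c) = iota c) /\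
  (forall x, act 1%g x = x) /\
  (forall g h, g \in G -> h \in G -> forall x, act (g * h)%g x = act g (act h x)) /\
  (forall g, g \in G -> (forall x, act g x = x) -> g = 1%g).

Definition stab (K : fieldType) (gT : finGroupType) (G : {group gT})
  (act : gT -> K -> K) (v : K -> int) : {set gT} :=
  [set g in G | `[< forall x, v (act g x) = v x >]].

(* lower ramification group G_{P,i}:
   g in G_P with ord_P(g^* t - t) >= i+1 for all t in O_P *)
Definition ram (K : fieldType) (gT : finGroupType) (G : {group gT})
  (act : gT -> K -> K) (v : K -> int) (i : nat) : {set gT} :=
  [set g in stab G act v | `[< forall t, 0 <= v t ->
       act g t - t = 0 \/ (i.+1)%:Z <= v (act g t - t) >]].

Definition dprime_is (K : fieldType) (gT : finGroupType) (G : {group gT})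
  (act : gT -> K -> K) (v : K -> int) (d : nat) : Prop :=
  exists N : nat, (forall i, (N <= i)%N -> #|ram G act v i| = 1%N) /\
    d = (\sum_(1 <= i < N) (#|ram G act v i| - 1))%N.

(* k(Y) = K^G *)
Definition fixed_field (K : fieldType) (gT : finGroupType) (G : {group gT})
  (act : gT -> K -> K) (y : K) : Prop :=
  forall g, g \in G -> act g y = y.

From HB Require Import structures.
From mathcomp Require Import all_boot all_order all_algebra all_fingroup all_solvable.
From mathcomp Require Import boolp.
Import Order.TTheory GRing.Theory Num.Theory.
Set Implicit Arguments. Unset Strict Implicit. Unset Printing Implicit Defensive.
Local Open Scope ring_scope.

(* The conjugates of z are free over K^G: a nonzero relation
   [\sum_g c_g g(z) = 0] is an element of the group algebra K^G[G] killing z,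
   and such elements are stable under the difference operators h - 1 of the
   regular action.  In characteristic p these are nilpotent on p-elements,
   (h - 1)^#[h] = h^#[h] - 1 = 0, so going up through maximal subgroups of the
   p-group G produces a nonzero G-invariant relation, i.e. a multiple c of
   [\sum_g g]; it sends z to c tr(z), a contradiction since tr(z) != 0.
   For spanning, a left kernel vector v of the K-matrix ((g h)(z))_(g,h) would
   give the relation with coefficients tr(a v_g), nonzero for a = z / v_i, so
   the matrix is invertible; the unique solution c of
   [\sum_h c_h (g h)(z) = g(y)] is G-invariant because each s in G merely
   permutes these equations.  Only the p-group hypothesis, the characteristic
   and tr(z) != 0 are used. *)

Section Translation.
Variables (K : fieldType) (gT : finGroupType).
Implicit Types (f u : gT -> K) (g h : gT).

Definition delta h f : gT -> K := fun x => f (h^-1 * x)%g - f x.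

Definition fixer f : {set gT} := [set h | [forall x, f (h^-1 * x)%g == f x]].

Lemma fixerP h f : reflect (forall x, f (h^-1 * x)%g = f x) (h \in fixer f).
Proof. by rewrite inE; apply: (iffP forallP) => fh x; apply/eqP. Qed.

Lemma group_set_fixer f : group_set (fixer f).
Proof.
apply/group_setP; split=> [|h1 h2 /fixerP fh1 /fixerP fh2]; apply/fixerP => x.
  by rewrite invg1 mul1g.
by rewrite invMg -mulgA fh2 fh1.
Qed.

Canonical fixer_group f := Group (group_set_fixer f).

Lemma delta_eq0_fixer h f : delta h f =1 (fun=> 0) -> h \in fixer f.
Proof. by move=> df0; apply/fixerP => x; apply/eqP; rewrite -subr_eq0; apply/eqP/df0. Qed.

Lemma fixer_delta (M : {set gT}) g f :
  (g \in 'N(M))%g -> M \subset fixer f -> M \subset fixer (delta g f).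
Proof.
move=> nMg /subsetP fixM; apply/subsetP => m mM; apply/fixerP => x.
have mgM : (m ^ g)%g \in M by rewrite memJ_norm.
rewrite /delta (fixerP _ _ (fixM _ mM)).
have -> : (g^-1 * (m^-1 * x) = (m ^ g)^-1 * (g^-1 * x))%g.
  by rewrite -conjVg conjgE -!mulgA mulKVg.
by rewrite (fixerP _ _ (fixM _ mgM)).
Qed.

Lemma iter_delta n h f x : iter n (delta h) f x =
  \sum_(i < n.+1) (('X - 1) ^+ n)`_i * f ((h ^+ i)^-1 * x)%g.
Proof.
elim: n x => [|n IHn] x.
  by rewrite big_ord1 expr0 coefC mul1r expg0 invg1 mul1g.
have size_n : size (('X - 1) ^+ n : {poly K}) = n.+1.
  by rewrite -polyC1 size_exp_XsubC.
rewrite iterS /delta !IHn exprSr mulrBr mulr1.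
under [RHS]eq_bigr => i _ do rewrite coefB mulrBl.
rewrite sumrB; congr (_ - _).
  rewrite [RHS]big_ord_recl coefMX eqxx mul0r add0r.
  apply: eq_bigr => i _.
  by rewrite coefMX /= /bump leq0n add1n expgS invMg mulgA.
by rewrite [RHS]big_ord_recr /= nth_default ?size_n // mul0r addr0.
Qed.

Variable p : nat.
Hypothesis pcharKp : p \in [pchar K].

Lemma iter_delta_order h f : (p.-elt h)%g -> iter #[h]%g (delta h) f =1 (fun=> 0).
Proof.
move=> p_h x; have pchar_ord : [pchar {poly K}].-nat #[h]%g.
  by rewrite (eq_pnat _ (pchar_poly K)) (eq_pnat _ (pcharf_eq pcharKp)).
rewrite iter_delta exprDn_pchar // exprNn_pchar // expr1n.
under eq_bigr => i _ do rewrite coefB coefXn coef1 mulrBl !mulr_natl !mulrb.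
rewrite sumrB -!big_mkcond /= !(big_ord1_eq _ (fun i => f (h ^- i * x)%g)) ltnSn /=.
by rewrite expg_order expg0 subrr.
Qed.

Implicit Types W : (gT -> K) -> Prop.

Lemma pelt_fixed_point W h f :
  (p.-elt h)%g -> (forall u, W u -> W (delta h u)) -> W f -> ~ f =1 (fun=> 0) ->
  exists u, [/\ W u, ~ u =1 (fun=> 0) & h \in fixer u].
Proof.
move=> p_h Wdelta; move: (iter_delta_order f p_h).
elim: #[h]%g f => [|n IHn] f fn0 Wf f_neq0; first by case: (f_neq0 fn0).
have [dh0 | dh_neq0] := pselect (delta h f =1 (fun=> 0)).
  by exists f; split; last exact: delta_eq0_fixer.
by rewrite iterSr in fn0; apply: IHn fn0 (Wdelta _ Wf) dh_neq0.
Qed.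

Theorem pgroup_fixed_point (H : {group gT}) W f :
  (p.-group H)%g -> (forall h u, h \in H -> W u -> W (delta h u)) ->
  W f -> ~ f =1 (fun=> 0) -> exists u, [/\ W u, ~ u =1 (fun=> 0) & H \subset fixer u].
Proof.
move=> + + Wf f_neq0; elim: {H}_.+1 {-2}H (ltnSn #|H|) => // n IHn H leHn pH Wdelta.
have [H1 | [M maxM _]] := maximal_exists (sub1G H).
  by exists f; split; rewrite // -H1 sub1G.
have prMH := maxgroupp maxM; have sMH := proper_sub prMH.
have nMH : H \subset 'N(M)%g := normal_norm (p_maximal_normal pH maxM).
have [_ [g gH notMg]] := properP prMH.
have [u1 [Wu1 u1_neq0 fixMu1]] : exists u, [/\ W u, ~ u =1 (fun=> 0) & M \subset fixer u].
  apply: IHn (pgroupS sMH pH) _; first exact: leq_trans (proper_card prMH) leHn.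
  by move=> h u hM; apply/Wdelta/(subsetP sMH).
pose W' u := W u /\ M \subset fixer u.
have W'delta u : W' u -> W' (delta g u).
  by case=> Wu fixMu; split; [apply: Wdelta | apply: fixer_delta; rewrite ?(subsetP nMH)].
have [u [[Wu fixMu] u_neq0 fixgu]] :=
  pelt_fixed_point (mem_p_elt pH gH) W'delta (conj Wu1 fixMu1) u1_neq0.
exists u; split=> //.
have : ~~ (H :&: fixer u \proper H).
  apply/negP => prH; have sMHu : M \subset H :&: fixer u by rewrite subsetI sMH.
  by move: notMg; rewrite -((maxgroupP maxM).2 _ prH sMHu) inE gH /= fixgu.
by rewrite properE subsetIl negbK subsetI => /andP[].
Qed.
End Translation.

Lemma sum_mulgl (V : nmodType) (gT : finGroupType) (G : {group gT}) g (F : gT -> V) :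
  g \in G -> \sum_(x in G) F (g * x)%g = \sum_(x in G) F x.
Proof.
by move=> gG; rewrite [RHS](reindex_inj (mulgI g)); apply: eq_bigl => x; rewrite groupMl.
Qed.

Section NormalBasis.
Variables (K : fieldType) (gT : finGroupType) (G : {group gT}) (act : gT -> K -> K).
Hypothesis actD : forall g, g \in G -> forall x y, act g (x + y) = act g x + act g y.
Hypothesis actM : forall g, g \in G -> forall x y, act g (x * y) = act g x * act g y.
Hypothesis act1 : forall x, act 1%g x = x.
Hypothesis actMg : forall g h, g \in G -> h \in G -> forall x,
  act (g * h)%g x = act g (act h x).

Local Notation fixed := (fixed_field G act).

Lemma act0 g : g \in G -> act g 0 = 0.
Proof. by move=> gG; apply: (addrI (act g 0)); rewrite -actD // !addr0. Qed.

Lemma actB g x y : g \in G -> act g (x - y) = act g x - act g y.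
Proof. by move=> gG; apply: (addIr (act g y)); rewrite -actD // !subrK. Qed.

Lemma act_sum g (I : Type) (r : seq I) (P : pred I) (F : I -> K) : g \in G ->
  act g (\sum_(i <- r | P i) F i) = \sum_(i <- r | P i) act g (F i).
Proof. by move=> gG; apply: (big_morph (act g) (actD gG) (act0 gG)). Qed.

Definition trace w := \sum_(s in G) act s w.

Lemma trace_fixed w : fixed (trace w).
Proof.
move=> t tG; rewrite act_sum //.
under eq_bigr => s sG do rewrite -actMg //.
exact: (sum_mulgl (fun s => act s w)).
Qed.

Variables (p : nat) (z : K).
Hypothesis pcharKp : p \in [pchar K].
Hypothesis pG : (p.-group G)%g.
Hypothesis trace_z_neq0 : trace z != 0.

(* [f] stands for [\sum_(x in G) f x * x] in the group algebra K^G[G]. *)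
Definition conj_relation (f : gT -> K) := [/\ forall x, x \notin G -> f x = 0,
  forall x, x \in G -> fixed (f x) & \sum_(x in G) f x * act x z = 0].

Lemma conj_relation_delta h f : h \in G -> conj_relation f -> conj_relation (delta h f).
Proof.
move=> hG [f0 f_fixed f_rel].
have shift_rel : \sum_(x in G) f (h^-1 * x)%g * act x z = 0.
  rewrite -(sum_mulgl (fun x => f (h^-1 * x)%g * act x z) hG).
  under eq_bigr => x xG do rewrite mulKg actMg // -{1}(f_fixed _ xG _ hG) -actM //.
  by rewrite -act_sum // f_rel act0.
split=> [x xG | x xG t tG |]; rewrite /delta.
- by rewrite !f0 ?subrr // groupMl ?groupV.
- by rewrite actB // !f_fixed ?groupMl ?groupV.
by under eq_bigr => x _ do rewrite mulrBl; rewrite sumrB shift_rel f_rel subrr.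
Qed.

Lemma conj_relation_eq0 f : conj_relation f -> G \subset fixer f -> f =1 (fun=> 0).
Proof.
move=> [f0 _ f_rel] /subsetP fixGf.
have f_const x : x \in G -> f x = f 1%g.
  by move=> xG; rewrite -[in LHS](mulg1 x) -{1}(invgK x) (fixerP _ _ (fixGf _ _)) ?groupV.
have : f 1%g * trace z = 0.
  by rewrite mulr_sumr -[RHS]f_rel; apply: eq_bigr => x xG; rewrite f_const.
move/eqP; rewrite mulf_eq0 (negbTE trace_z_neq0) orbF => /eqP f1_0 x.
by case: (boolP (x \in G)) => [/f_const -> | /f0].
Qed.

Theorem conj_free (c : gT -> K) : (forall g, g \in G -> fixed (c g)) ->
  \sum_(g in G) c g * act g z = 0 -> forall g, g \in G -> c g = 0.
Proof.
move=> c_fixed c_rel g gG; have [// | cg_neq0] := eqVneq (c g) 0; exfalso.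
pose f x := if x \in G then c x else 0.
have f_rel : conj_relation f.
  split=> [x /negbTE | x xG | ]; rewrite /f ?xG.
  - by move ->.
  - exact: c_fixed.
  by rewrite -[RHS]c_rel; apply: eq_bigr => x ->.
have f_neq0 : ~ f =1 (fun=> 0) by move/(_ g); rewrite /f gG; apply/eqP.
have [u [u_rel u_neq0 fixGu]] :=
  pgroup_fixed_point pcharKp pG (fun h u hG => conj_relation_delta hG) f_rel f_neq0.
exact/u_neq0/conj_relation_eq0.
Qed.

Local Notation idx := (enum_rank_in (group1 G)).

Definition conj_mx : 'M[K]_#|G| := \matrix_(i, j) act (enum_val j * enum_val i)%g z.

Lemma conj_mx_col (v : 'rV[K]_#|G|) g : g \in G ->
  (v *m conj_mx) 0 (idx g) = \sum_i v 0 i * act (g * enum_val i)%g z.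
Proof.
by move=> gG; rewrite mxE; apply: eq_bigr => i _; rewrite mxE enum_rankK_in.
Qed.

Lemma conj_mx_left_kernel (v : 'rV[K]_#|G|) a : v *m conj_mx = 0 ->
  \sum_(g in G) trace (a * v 0 (idx g)) * act g z = 0.
Proof.
move=> vA0; rewrite big_enum_val /=.
under eq_bigr => i _ do rewrite enum_valK_in mulr_suml.
rewrite exchange_big /=; apply: big1 => s sG.
have s'G : (s^-1)%g \in G by rewrite groupV.
under eq_bigr => i _ do rewrite -[X in act X z](mulKVg s (enum_val i))
  actMg ?groupMl ?enum_valP // -actM -?mulrA ?groupMl ?enum_valP //.
rewrite -act_sum // -mulr_sumr.
by have := conj_mx_col v s'G; rewrite vA0 mxE => <-; rewrite mulr0 act0.
Qed.

Lemma conj_mx_unit : conj_mx \in unitmx.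
Proof.
rewrite unitmxE unitfE; apply/det0P => -[v /matrix0Pn [i0 [i vi_neq0]] vA0].
rewrite ord1 in vi_neq0.
have := conj_free (c := fun g => trace (z / v 0 i * v 0 (idx g)))
  (fun g _ => trace_fixed _) (conj_mx_left_kernel _ vA0) (enum_valP i).
by rewrite enum_valK_in divfK //; apply/eqP.
Qed.

Definition conj_row y : 'rV[K]_#|G| := \row_j act (enum_val j) y.

Lemma conj_mx_solution_fixed (c : 'rV[K]_#|G|) y :
  c *m conj_mx = conj_row y -> forall i, fixed (c 0 i).
Proof.
move=> cA i s sG.
suff sc_sol : map_mx (act s) c *m conj_mx = conj_row y.
  have : map_mx (act s) c = c.
    by rewrite -[LHS](mulmxK conj_mx_unit) sc_sol -cA (mulmxK conj_mx_unit).
  by move/rowP/(_ i); rewrite mxE.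
apply/rowP => j; have ejG := enum_valP j.
have gG : (s^-1 * enum_val j)%g \in G by rewrite groupMl ?groupV.
have := conj_mx_col c gG; rewrite cA !mxE enum_rankK_in // => row_g.
rewrite -[enum_val j](mulKVg s) actMg // row_g act_sum //; apply: eq_bigr => k _.
by rewrite !mxE actM // -actMg ?groupM ?groupV ?enum_valP // mulgA mulKVg.
Qed.

Theorem conj_span y : exists c : gT -> K,
  (forall g, g \in G -> fixed (c g)) /\ y = \sum_(g in G) c g * act g z.
Proof.
pose c := conj_row y *m invmx conj_mx.
have cA : c *m conj_mx = conj_row y by rewrite mulmxKV ?conj_mx_unit.
exists (fun g => c 0 (idx g)); split=> [g _ | ]; first exact: conj_mx_solution_fixed cA _.
have := conj_mx_col c (group1 G); rewrite cA mxE enum_rankK_in ?group1 // act1 => ->.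
by rewrite [RHS]big_enum_val /=; apply: eq_bigr => i _; rewrite enum_valK_in mul1g.
Qed.
End NormalBasis.

Theorem proposition3p1 (p : nat) (k : closedFieldType) (K : fieldType)
  (iota : {rmorphism k -> K}) (gT : finGroupType) (G : {group gT})
  (act : gT -> K -> K) (z : K) :
  p \in [pchar k] ->
  function_field_1 iota ->
  faithful_k_action iota G act ->
  (p.-group G)%g ->
  (forall v, is_place iota v -> (stab G act v <| G)%g) ->
  (forall v, is_place iota v ->
     forall d, dprime_is G act v d -> - (d%:Z) <= v z) ->
  \sum_(g in G) act g z != 0 ->
  (forall c : gT -> K, (forall g, g \in G -> fixed_field G act (c g)) ->
     \sum_(g in G) c g * act g z = 0 -> forall g, g \in G -> c g = 0) /\
  (forall y : K, exists c : gT -> K,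
     (forall g, g \in G -> fixed_field G act (c g)) /\
     y = \sum_(g in G) c g * act g z).
Proof.
move=> pchar_k _ [actD [actM [_ [_ [act1 [actMg _]]]]]] pG _ _ trace_z_neq0.
have pcharKp : p \in [pchar K] := rmorph_pchar iota pchar_k.
split; first exact: (conj_free actD actM actMg pcharKp pG trace_z_neq0).
exact: (conj_span actD actM act1 actMg pcharKp pG trace_z_neq0).
Qed.
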